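(* Let $\Omega=\Omega_0\cup\Omega_1$ be an at most unary topological signature and let $X$ be an arbitrary topological space. Then the Polish representation $\Phi_X:\overline{\Omega}_X\mathsf{Fin}_\Omega\to S_{\mathsf M}$ is an isomorphism of topological algebras.
   Context: $\Omega=\biguplus_n\Omega_n$ is a topological signature with $\Omega_n=\emptyset$ for $n\ge2$. A topological $\Omega$-algebra has continuous evaluation maps $\Omega_n\times A^n\to A$. $\mathsf{Fin}_\Omega$ is the class of finite discrete topological $\Omega$-algebras; $\overline{\Omega}_X\mathsf{Fin}_\Omega$ is the free profinite $\Omega$-algebra over the space $X$: a profinite $\Omega$-algebra with a continuous map $\iota:X\to\overline{\Omega}_X\mathsf{Fin}_\Omega$ whose image generates a dense subalgebra, such that every continuous map from $X$ into a member of $\mathsf{Fin}_\Omega$ extends uniquely through $\iota$ to a continuous homomorphism. Let $X\cup\Omega$ be the topological disjoint union of $X$ and the spaces $\Omega_n$, and $\overline{\Omega}_{X\cup\Omega}\mathsf M$ the free profinite monoid over this space (a profinite monoid with continuous map $\eta$ from $X\cup\Omega$ whose image generates a dense submonoid, universal for continuous maps into finite discrete monoids). It is an $\Omega$-algebra via $E_n(w,u_1,\dots,u_n)=\eta(w)u_1\cdots u_n$, and $S_{\mathsf M}$ is the closed $\Omega$-subalgebra generated by $\eta(X)$. The Polish representation $\Phi_X$ is the unique continuous $\Omega$-homomorphism $\overline{\Omega}_X\mathsf{Fin}_\Omega\to S_{\mathsf M}$ with $\Phi_X\circ\iota=\eta|_X$. *)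

From HB Require Import structures.
From mathcomp Require Import all_boot all_order all_algebra.
From mathcomp Require Import all_classical all_reals all_analysis.
Set Implicit Arguments. Unset Strict Implicit. Unset Printing Implicit Defensive.
Local Open Scope classical_set_scope.

(* MathComp + MathComp-Analysis (topologicalType).
   An at most unary topological signature Omega = Omega_0 u Omega_1 is given
   by two topological spaces O0 (constants) and O1 (unary symbols). *)

Definition top_alg (O0 O1 A : topologicalType)
  (c : O0 -> A) (u : O1 -> A -> A) : Prop :=
  continuous c /\ continuous (fun p : O1 * A => u p.1 p.2).

Definition discrete_top (T : topologicalType) : Prop := forall U : set T, open U.

Definition fin_alg (O0 O1 B : topologicalType)
  (c : O0 -> B) (u : O1 -> B -> B) : Prop :=
  finite_set [set: B] /\ discrete_top B /\ top_alg c u.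

Definition alg_hom (O0 O1 A B : Type)
  (cA : O0 -> A) (uA : O1 -> A -> A) (cB : O0 -> B) (uB : O1 -> B -> B)
  (f : A -> B) : Prop :=
  (forall w, f (cA w) = cB w) /\ (forall w a, f (uA w a) = uB w (f a)).

Definition alg_closed (O0 O1 A : Type) (c : O0 -> A) (u : O1 -> A -> A)
  (S : set A) : Prop :=
  (forall w, S (c w)) /\ (forall w a, S a -> S (u w a)).

Definition alg_gen (O0 O1 A : Type) (c : O0 -> A) (u : O1 -> A -> A)
  (G : set A) : set A :=
  fun a => forall S : set A, G `<=` S -> alg_closed c u S -> S a.

Definition closed_alg_gen (O0 O1 A : topologicalType) (c : O0 -> A)
  (u : O1 -> A -> A) (G : set A) : set A :=
  fun a => forall S : set A, G `<=` S -> alg_closed c u S -> closed S -> S a.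

(* profinite Omega-algebra: compact, and continuous homomorphisms into
   finite discrete Omega-algebras separate points (equivalently, an inverse
   limit of finite discrete Omega-algebras) *)
Definition profinite_alg (O0 O1 A : topologicalType)
  (c : O0 -> A) (u : O1 -> A -> A) : Prop :=
  top_alg c u /\ compact [set: A] /\
  forall a b : A, a <> b ->
    exists (B : topologicalType) (cB : O0 -> B) (uB : O1 -> B -> B) (f : A -> B),
      fin_alg cB uB /\ continuous f /\ alg_hom c u cB uB f /\ f a <> f b.

Definition free_profinite_alg (O0 O1 X F : topologicalType)
  (c : O0 -> F) (u : O1 -> F -> F) (iota : X -> F) : Prop :=
  profinite_alg c u /\ continuous iota /\
  closure (alg_gen c u (range iota)) = [set: F] /\
  forall (B : topologicalType) (cB : O0 -> B) (uB : O1 -> B -> B) (phi : X -> B),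
    fin_alg cB uB -> continuous phi ->
    exists! psi : F -> B, continuous psi /\ alg_hom c u cB uB psi /\ psi \o iota = phi.

Definition monoid_ax (M : Type) (mul : M -> M -> M) (one : M) : Prop :=
  (forall x y z, mul x (mul y z) = mul (mul x y) z) /\
  (forall x, mul one x = x) /\ (forall x, mul x one = x).

Definition top_monoid (M : topologicalType) (mul : M -> M -> M) (one : M) : Prop :=
  monoid_ax mul one /\ continuous (fun p : M * M => mul p.1 p.2).

Definition fin_monoid (B : topologicalType) (mul : B -> B -> B) (one : B) : Prop :=
  finite_set [set: B] /\ discrete_top B /\ top_monoid mul one.

Definition monoid_hom (M N : Type) (mulM : M -> M -> M) (oneM : M)
  (mulN : N -> N -> N) (oneN : N) (f : M -> N) : Prop :=
  f oneM = oneN /\ (forall x y, f (mulM x y) = mulN (f x) (f y)).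

Definition submonoid_gen (M : Type) (mul : M -> M -> M) (one : M) (G : set M) : set M :=
  fun a => forall S : set M, G `<=` S -> S one ->
    (forall x y, S x -> S y -> S (mul x y)) -> S a.

Definition profinite_monoid (M : topologicalType) (mul : M -> M -> M) (one : M) : Prop :=
  top_monoid mul one /\ compact [set: M] /\
  forall a b : M, a <> b ->
    exists (B : topologicalType) (mulB : B -> B -> B) (oneB : B) (f : M -> B),
      fin_monoid mulB oneB /\ continuous f /\ monoid_hom mul one mulB oneB f /\ f a <> f b.

(* (M, mul, one, eta) is a free profinite monoid over the topological disjoint
   union X u O0 u O1; the continuous map eta from the disjoint union is given
   by its three (continuous) restrictions etaX, eta0, eta1. *)
Definition free_profinite_monoid (O0 O1 X M : topologicalType)
  (mul : M -> M -> M) (one : M) (etaX : X -> M) (eta0 : O0 -> M) (eta1 : O1 -> M) : Prop :=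
  profinite_monoid mul one /\
  continuous etaX /\ continuous eta0 /\ continuous eta1 /\
  closure (submonoid_gen mul one (range etaX `|` range eta0 `|` range eta1)) = [set: M] /\
  forall (B : topologicalType) (mulB : B -> B -> B) (oneB : B)
         (fX : X -> B) (f0 : O0 -> B) (f1 : O1 -> B),
    fin_monoid mulB oneB -> continuous fX -> continuous f0 -> continuous f1 ->
    exists! psi : M -> B, continuous psi /\ monoid_hom mul one mulB oneB psi /\
      psi \o etaX = fX /\ psi \o eta0 = f0 /\ psi \o eta1 = f1.

Definition monoid_E0 (O0 M : Type) (eta0 : O0 -> M) : O0 -> M := eta0.
Definition monoid_E1 (O1 M : Type) (mul : M -> M -> M) (eta1 : O1 -> M) : O1 -> M -> M :=
  fun w x => mul (eta1 w) x.

Definition S_M (O0 O1 X M : topologicalType) (mul : M -> M -> M)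
  (etaX : X -> M) (eta0 : O0 -> M) (eta1 : O1 -> M) : set M :=
  closed_alg_gen (monoid_E0 eta0) (monoid_E1 mul eta1) (range etaX).

Definition homeomorphism_onto (A B : topologicalType) (f : A -> B) (S : set B) : Prop :=
  continuous f /\ {in [set: A] &, injective f} /\ f @` [set: A] = S /\
  forall U : set A, open U -> exists V : set B, open V /\ f @` U = V `&` S.

From mathcomp Require Import all_boot all_order all_algebra.
From mathcomp Require Import all_classical all_reals all_analysis.
Local Open Scope classical_set_scope.

(* Let f : F -> B be a continuous homomorphism onto a finite algebra. The
   free monoid on X + O0 + O1 acts on B: x as the constant map at f (iota x),
   a constant w as the constant map at w, a unary symbol w as b |-> w(b). The
   induced continuous morphism psi from the free profinite monoid into the
   transformation monoid of B satisfies psi (Phi z) = const (f z) on a closed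
   subalgebra containing iota(X), hence everywhere. So Phi separates whatever
   finite algebras separate, and F being profinite, Phi is injective. As F is
   compact and M Hausdorff, Phi is a closed embedding, and its image is a
   closed subalgebra containing eta(X), that is S_M. *)

Lemma discrete_top_continuous {T U : topologicalType} (f : T -> U) :
  discrete_top T -> continuous f.
Proof. by move=> dT; apply/continuousP => A _; apply: dT. Qed.

Lemma discrete_top_nbhs1 {T : topologicalType} (x : T) :
  discrete_top T -> nbhs x [set x].
Proof. by move=> dT; apply: open_nbhs_nbhs; split => //; apply: dT. Qed.

Lemma continuous_discrete_locally_constant {T N : topologicalType} {g : T -> N} :
  discrete_top N -> continuous g -> forall x, nbhs x [set y | g y = g x].
Proof. by move=> dN gc x; apply: (gc x [set g x]); apply: discrete_top_nbhs1. Qed.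

Lemma closed_eq_discrete {T N : topologicalType} {g1 g2 : T -> N} :
  discrete_top N -> continuous g1 -> continuous g2 ->
  closed [set z | g1 z = g2 z].
Proof.
move=> dN c1 c2; rewrite -[X in closed X]setCK closedC openE /interior => z nz.
apply: filterS (filterI (continuous_discrete_locally_constant dN c1 z)
                        (continuous_discrete_locally_constant dN c2 z)).
by move=> w [/= -> ->].
Qed.

Lemma discrete_separated_hausdorff {M : topologicalType} :
  (forall a b : M, a <> b ->
    exists (B : topologicalType) (f : M -> B),
      discrete_top B /\ continuous f /\ f a <> f b) -> hausdorff_space M.
Proof.
move=> sepM; rewrite open_hausdorff => x y /eqP nxy.
have [B [f [dB [fc fxy]]]] := sepM _ _ nxy.
exists (f @^-1` [set f x], f @^-1` [set f y]); first by split; rewrite inE.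
split; [exact: (continuousP _).1 fc _ (dB _) | exact: (continuousP _).1 fc _ (dB _)|].
by apply/eqP; rewrite -subset0 => z [/= -> ].
Qed.

Lemma profinite_monoid_hausdorff {M : topologicalType} {mul : M -> M -> M} {one : M} :
  profinite_monoid mul one -> hausdorff_space M.
Proof.
move=> [_ [_ sepM]]; apply: discrete_separated_hausdorff => a b /sepM.
by move=> [B [_ [_ [f [[_ [dB _]] [fc [_ fab]]]]]]]; exists B, f.
Qed.

Lemma compact_image_closed {A B : topologicalType} {f : A -> B} {C : set A} :
  compact [set: A] -> hausdorff_space B -> continuous f -> closed C ->
  closed (f @` C).
Proof.
move=> cptA hausB fc clC; apply: compact_closed => //.
apply: continuous_compact; first exact: continuous_subspaceT.
exact: subclosed_compact clC cptA _.
Qed.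

Lemma compact_injective_homeomorphism_onto {A B : topologicalType} {f : A -> B} :
  compact [set: A] -> hausdorff_space B -> continuous f -> injective f ->
  homeomorphism_onto f (f @` [set: A]).
Proof.
move=> cptA hausB fc finj; split=> //; split; first by move=> ? ? _ _ /finj.
split=> // U oU; exists (~` (f @` ~` U)); split.
  by rewrite openC; apply: compact_image_closed => //; rewrite closedC.
apply/seteqP; split.
  move=> _ [x Ux <-]; split; last by exists x.
  by move=> [y nUy /finj eyx]; apply: nUy; rewrite eyx.
move=> y [nfU [x _ fxy]]; rewrite -fxy in nfU *.
have [Ux|nUx] := pselect (U x); first by exists x.
by case: nfU; exists x.
Qed.

Lemma finite_set_retract {B : eqType} (b0 : B) :
  finite_set [set: B] ->
  exists n (e : B -> 'I_n) (d : 'I_n -> B), cancel e d.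
Proof.
move=> /finite_seqP [s Hs]; exists (size s).+1.
exists (fun x => inord (index x s)), (fun i => nth b0 s i) => x.
have xs : x \in s by have : [set` s] x by rewrite -Hs.
by rewrite inordK ?nth_index // ltnS index_size.
Qed.

Section GeneratedSubalgebras.
Context {O0 O1 : topologicalType}.

Lemma closure_alg_gen_sub {A : topologicalType} {c : O0 -> A} {u : O1 -> A -> A}
    {G : set A} :
  closure (alg_gen c u G) `<=` closed_alg_gen c u G.
Proof.
move=> z clz S GS algS clS; rewrite (closure_id S).1 //.
by apply: closureS clz => y; apply.
Qed.

Lemma closed_alg_gen_sub_image {A B X : topologicalType}
    {cA : O0 -> A} {uA : O1 -> A -> A} {cB : O0 -> B} {uB : O1 -> B -> B}
    {h : A -> B} {iota : X -> A} :
  alg_hom cA uA cB uB h -> closed (h @` [set: A]) ->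
  closed_alg_gen cB uB (range (h \o iota)) `<=` h @` [set: A].
Proof.
move=> [h0 h1] clh z; apply => //.
- by move=> _ [x _ <-]; exists (iota x).
- split; first by move=> w; exists (cA w) => //; rewrite h0.
  by move=> w _ [x _ <-]; exists (uA w x) => //; rewrite h1.
Qed.

End GeneratedSubalgebras.

(* The transformation monoid of a finite set B, realised on 'I_n through a
   retraction e : B -> 'I_n, d : 'I_n -> B. *)
Section TransformationMonoid.
Context {n : nat}.

Definition tmonoid := discrete_topology {ffun 'I_n -> 'I_n}.

Definition tcomp (g h : tmonoid) : tmonoid := [ffun i => g (h i)].

Definition tid : tmonoid := [ffun i => i].

Lemma fin_monoid_tmonoid : fin_monoid tcomp tid.
Proof.
split; first exact: (@finite_finset {ffun 'I_n -> 'I_n} setT).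
split; first by move=> U; apply: discrete_open.
split.
  split; first by move=> x y z; apply/ffunP => i; rewrite !ffunE.
  by split=> x; apply/ffunP => i; rewrite !ffunE.
move=> [g h] U /= /nbhs_singleton Ugh.
exists ([set g], [set h]); first by split; apply: discrete_set1.
by move=> [x y] [/= -> ->].
Qed.

Context {O1 B : topologicalType}.
Variable uB : O1 -> B -> B.
Variables (e : B -> 'I_n) (d : 'I_n -> B).
Hypothesis eK : cancel e d.

Definition tconst (b : B) : tmonoid := [ffun => e b].

Definition tact (w : O1) : tmonoid := [ffun i => e (uB w (d i))].

Lemma tconst_inj : injective tconst.
Proof.
move=> x y /(congr1 (fun g : tmonoid => g (e x))); rewrite !ffunE.
by move/(can_inj eK).
Qed.

Lemma tact_tconst w b : tcomp (tact w) (tconst b) = tconst (uB w b).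
Proof. by apply/ffunP => i; rewrite !ffunE eK. Qed.

Lemma tact_continuous :
  discrete_top B -> continuous (fun p : O1 * B => uB p.1 p.2) -> continuous tact.
Proof.
move=> dB uBc w0; apply/discrete_cvg.
suff : nbhs w0 [set w | tact w = tact w0] by [].
have slice_cont b : continuous (uB ^~ b).
  by move=> w; apply: continuous2_cvg (uBc (w, b)) cvg_id (cvg_cst b).
have : \forall w \near w0, forall i, uB w (d i) = uB w0 (d i).
  by apply: filter_forall => i; apply: continuous_discrete_locally_constant.
by apply: filterS => w Hw /=; apply/ffunP => i; rewrite !ffunE Hw.
Qed.

End TransformationMonoid.

Arguments fin_monoid_tmonoid : clear implicits.
Arguments tconst_inj {n B e d}.
Arguments tact_tconst {n O1 B uB e d}.
Arguments tact_continuous {n O1 B uB}.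

Section PolishRepresentation.
Context {O0 O1 X F M : topologicalType}.
Context {c : O0 -> F} {u : O1 -> F -> F} {iota : X -> F}.
Context {mul : M -> M -> M} {one : M}.
Context {etaX : X -> M} {eta0 : O0 -> M} {eta1 : O1 -> M}.
Context {Phi : F -> M}.
Hypothesis freeF : free_profinite_alg c u iota.
Hypothesis freeM : free_profinite_monoid mul one etaX eta0 eta1.
Hypothesis Phi_cont : continuous Phi.
Hypothesis Phi_hom : alg_hom c u (monoid_E0 eta0) (monoid_E1 mul eta1) Phi.
Hypothesis Phi_iota : Phi \o iota = etaX.

Lemma free_closed_subalg_total (E : set F) :
  range iota `<=` E -> alg_closed c u E -> closed E -> forall z, E z.
Proof.
move=> iotaE algE clE z; have [_ [_ [denseF _]]] := freeF.
have : closed_alg_gen c u (range iota) z.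
  by apply: closure_alg_gen_sub; rewrite denseF.
by move/(_ E); apply.
Qed.

Lemma Phi_separates_fin_alg {B : topologicalType} {cB : O0 -> B}
    {uB : O1 -> B -> B} {f : F -> B} :
  fin_alg cB uB -> continuous f -> alg_hom c u cB uB f ->
  forall a b, Phi a = Phi b -> f a = f b.
Proof.
move=> [finB [dB [cBc uBc]]] fc [f0 f1] a b Pab.
have [_ [iota_cont _]] := freeF.
have [_ [_ [_ [_ [_ univM]]]]] := freeM.
have [Phi0 Phi1] := Phi_hom.
have [n [e [d eK]]] := finite_set_retract (f a) finB.
have tconst_cont : continuous (tconst e) by apply: discrete_top_continuous.
have [psi [[psi_cont [[_ psiM] [psiX [psi0 psi1]]]] _]] :=
  univM _ _ _ (tconst e \o f \o iota) (tconst e \o cB) (tact uB e d)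
    (fin_monoid_tmonoid n)
    (fun x => continuous_comp (continuous_comp (iota_cont x) (fc _)) (tconst_cont _))
    (fun w => continuous_comp (cBc w) (tconst_cont _))
    (tact_continuous e d dB uBc).
have psi_Phi : forall z, psi (Phi z) = tconst e (f z).
  apply: free_closed_subalg_total.
  - move=> _ [x _ <-] /=; rewrite -[Phi (iota x)]/((Phi \o iota) x) Phi_iota.
    by move/(congr1 (@^~ x)): psiX.
  - split=> [w|w y /= psiy].
      by rewrite /= Phi0 f0; move/(congr1 (@^~ w)): psi0.
    rewrite /= Phi1 /monoid_E1 psiM psiy f1 -(tact_tconst eK).
    by move/(congr1 (@^~ w)): psi1 => /= <-.
  - apply: closed_eq_discrete => [U||].
    + exact: discrete_open.
    + by move=> x; exact (continuous_comp (Phi_cont x) (psi_cont _)).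
    + by move=> x; exact (continuous_comp (fc x) (tconst_cont _)).
by apply: (tconst_inj eK); rewrite -!psi_Phi Pab.
Qed.

Lemma Phi_injective : injective Phi.
Proof.
move=> a b Pab; apply: contrapT => nab.
have [[_ [_ sepF]] _] := freeF.
have [B [cB [uB [f [finB [fc [fh fab]]]]]]] := sepF a b nab.
by apply: fab; apply: Phi_separates_fin_alg finB fc fh a b Pab.
Qed.

Hypothesis Phi_S_M : forall z, S_M mul etaX eta0 eta1 (Phi z).

Lemma Phi_image : Phi @` [set: F] = S_M mul etaX eta0 eta1.
Proof.
have [[_ [cptF _]] _] := freeF.
apply/seteqP; split; first by move=> _ [z _ <-].
rewrite /S_M -Phi_iota; apply: (closed_alg_gen_sub_image Phi_hom).
apply: compact_image_closed => //.
exact: profinite_monoid_hausdorff freeM.1.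
Qed.

End PolishRepresentation.

Theorem theorem4p15
  (O0 O1 X : topologicalType)
  (F : topologicalType) (c : O0 -> F) (u : O1 -> F -> F) (iota : X -> F)
  (M : topologicalType) (mul : M -> M -> M) (one : M)
  (etaX : X -> M) (eta0 : O0 -> M) (eta1 : O1 -> M)
  (Phi : F -> M) :
  free_profinite_alg c u iota ->
  free_profinite_monoid mul one etaX eta0 eta1 ->
  (* Phi is the Polish representation Phi_X: the (unique) continuous
     Omega-homomorphism F -> S_M with Phi \o iota = eta|_X *)
  continuous Phi ->
  (forall x, S_M mul etaX eta0 eta1 (Phi x)) ->
  alg_hom c u (monoid_E0 eta0) (monoid_E1 mul eta1) Phi ->
  Phi \o iota = etaX ->
  (* Phi is an isomorphism of topological algebras onto S_M *)
  homeomorphism_onto Phi (S_M mul etaX eta0 eta1).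
Proof.
move=> freeF freeM Phi_cont Phi_S_M Phi_hom Phi_iota.
have [[_ [cptF _]] _] := freeF.
rewrite -(Phi_image freeF freeM Phi_cont Phi_hom Phi_iota Phi_S_M).
apply: compact_injective_homeomorphism_onto => //.
- exact: profinite_monoid_hausdorff freeM.1.
- exact: Phi_injective freeF freeM Phi_cont Phi_hom Phi_iota.
Qed.
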